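(* Let $T$ be a Lie triple system over a field of characteristic zero and $U(T)$ its universal enveloping algebra. For $a,c\in T$ let $D_{a,c}\colon U(T)\to U(T)$, $D_{a,c}(x)=a(cx)-c(ax)$. Then for all $n\ge 1$ and $a,b,c\in T$, $$(c^n,a,b)=\frac{n}{2}\,c^{n-1}[a,c,b]-\frac12\sum_{i=0}^{n-2}\bigl(c^i,\,D_{a,c}(c^{n-1-i}),\,b\bigr).$$ Moreover, for all $n\ge 1$ and $a,c\in T$, $$c^n a=\tfrac12\,(ac^n+c^na)+\sum_{i=0}^{n-2}c^i\,(a,c,c^{n-1-i}).$$
   Context: A Lie triple system (L.t.s.) is a vector space $T$ with a trilinear product $[x,y,z]$ satisfying $[x,x,y]=0$, $[x,y,z]+[y,z,x]+[z,x,y]=0$, and $[a,b,[x,y,z]]=[[a,b,x],y,z]+[x,[a,b,y],z]+[x,y,[a,b,z]]$. For a unital nonassociative algebra $A$ with associator $(x,y,z)=(xy)z-x(yz)$, $\mathrm{LN_{alt}}(A)=\{a\in A : (a,x,y)=-(x,a,y)\ \forall x,y\in A\}$ is an L.t.s. with $[a,b,c]=a(bc)-b(ac)-c(ab)+c(ba)$. The universal enveloping algebra $U(T)$ is the unital algebra with an L.t.s. monomorphism $T\to\mathrm{LN_{alt}}(U(T))$ (elements of $T$ identified with their images) such that $ab=ba$ for $a,b\in T$, universal for L.t.s. homomorphisms into $\mathrm{LN_{alt}}(A)$ with this commutation property. For $c\in T$ the subalgebra generated by $c$ is associative, so $c^n$ is well defined ($c^0=1$). *)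

From HB Require Import structures.
From mathcomp Require Import all_boot all_order all_algebra.
Set Implicit Arguments. Unset Strict Implicit. Unset Printing Implicit Defensive.
Import GRing.Theory.
Local Open Scope ring_scope.

Definition is_lin (K : fieldType) (V W : lmodType K) (f : V -> W) : Prop :=
  forall (k : K) (x y : V), f (k *: x + y) = k *: f x + f y.

Definition trilinear (K : fieldType) (T : lmodType K) (tp : T -> T -> T -> T) :=
  [/\ forall y z, is_lin (fun x => tp x y z),
      forall x z, is_lin (fun y => tp x y z) &
      forall x y, is_lin (fun z => tp x y z)].

Definition is_lts (K : fieldType) (T : lmodType K) (tp : T -> T -> T -> T) :=
  [/\ trilinear tp,
      forall x y, tp x x y = 0,
      forall x y z, tp x y z + tp y z x + tp z x y = 0 &
      forall a b x y z, tp a b (tp x y z)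
        = tp (tp a b x) y z + tp x (tp a b y) z + tp x y (tp a b z)].

Definition is_ualg (K : fieldType) (A : lmodType K) (mul : A -> A -> A) (one : A) :=
  [/\ forall y, is_lin (fun x => mul x y),
      forall x, is_lin (fun y => mul x y),
      forall x, mul one x = x &
      forall x, mul x one = x].

Definition assoc (K : fieldType) (A : lmodType K) (mul : A -> A -> A) (x y z : A) :=
  mul (mul x y) z - mul x (mul y z).

Definition in_LNalt (K : fieldType) (A : lmodType K) (mul : A -> A -> A) (a : A) :=
  forall x y, assoc mul a x y = - assoc mul x a y.

Definition lnalt_tp (K : fieldType) (A : lmodType K) (mul : A -> A -> A) (a b c : A) :=
  mul a (mul b c) - mul b (mul a c) - mul c (mul a b) + mul c (mul b a).

Definition comm_lts_hom (K : fieldType) (T : lmodType K) (tp : T -> T -> T -> T)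
    (B : lmodType K) (mulB : B -> B -> B) (f : T -> B) :=
  [/\ is_lin f,
      forall a, in_LNalt mulB (f a),
      forall a b c, f (tp a b c) = lnalt_tp mulB (f a) (f b) (f c) &
      forall a b, mulB (f a) (f b) = mulB (f b) (f a)].

Definition ualg_hom (K : fieldType) (A B : lmodType K) (mulA : A -> A -> A) (oneA : A)
    (mulB : B -> B -> B) (oneB : B) (g : A -> B) :=
  [/\ is_lin g, g oneA = oneB & forall x y, g (mulA x y) = mulB (g x) (g y)].

Definition is_UEA (K : fieldType) (T : lmodType K) (tp : T -> T -> T -> T)
    (A : lmodType K) (mul : A -> A -> A) (one : A) (iota : T -> A) :=
  [/\ is_ualg mul one,
      comm_lts_hom tp mul iota,
      injective iota &
      forall (B : lmodType K) (mulB : B -> B -> B) (oneB : B),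
        is_ualg mulB oneB ->
        forall f : T -> B, comm_lts_hom tp mulB f ->
        exists g : A -> B,
          [/\ ualg_hom mul one mulB oneB g,
              forall a, g (iota a) = f a &
              forall g' : A -> B, ualg_hom mul one mulB oneB g' ->
                 (forall a, g' (iota a) = f a) -> forall x, g' x = g x]].

(* Powers x^n := x (x (... (x 1))) ; for x = c in T this is well defined
   since the subalgebra generated by c is associative. *)
Definition npow (K : fieldType) (A : lmodType K) (mul : A -> A -> A) (one : A)
    (x : A) (n : nat) : A := iter n (mul x) one.

Definition Dop (K : fieldType) (A : lmodType K) (mul : A -> A -> A) (a c x : A) :=
  mul a (mul c x) - mul c (mul a x).

(* Write D for D_{a,c}.  Since a and c lie in LN_alt(U) and commute, D = -2 (a,c,_)
   and D(cy) = D(c) y + c D(y).  Telescoping a c^n - c^n a = sum_i c^i D(c^(n-1-i))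
   gives the second formula.  For the first, the universal property applied to the
   dual numbers U + eU and to t |-> t + e [a,c,t] yields a derivation of U(T)
   extending [a,c,_] = D on T; it agrees with D on c^k and c^k b, whence
   a(c^n b) - c^n(ab) = n c^(n-1) D(b) + sum_i c^i (D(c^(n-1-i)) b).  Adding
   2 (c^n,a,b) = a(c^n b) - c^n(ab) - (a c^n - c^n a) b, valid for a in LN_alt(U),
   gives the first formula. *)

From HB Require Import structures.
From mathcomp Require Import all_boot all_order all_algebra.
Import GRing.Theory.
Local Open Scope ring_scope.
Set Implicit Arguments. Unset Strict Implicit.

Definition linear_of (K : fieldType) (V W : lmodType K) (f : V -> W) (Hf : is_lin f) :
  {linear V -> W} := HB.pack f (GRing.isLinear.Build K V W *:%R f Hf).

Lemma natmul2_inj (K : fieldType) (V : lmodType K) :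
  (2%:R : K) != 0 -> injective (fun x : V => x *+ 2).
Proof. by move=> two_nz x y /= h; apply: (scalerI two_nz); rewrite !scaler_nat. Qed.

Section UnitalAlgebra.
Variables (K : fieldType) (A : lmodType K) (mul : A -> A -> A) (one : A).
Hypothesis Hmul : is_ualg mul one.

Lemma mul_linl y : is_lin (fun x => mul x y). Proof. by case: Hmul. Qed.
Lemma mul_linr x : is_lin (mul x). Proof. by case: Hmul. Qed.
Lemma mul1x x : mul one x = x. Proof. by case: Hmul. Qed.
Lemma mulx1 x : mul x one = x. Proof. by case: Hmul. Qed.

Lemma mulDl x y z : mul (x + y) z = mul x z + mul y z.
Proof. exact: (raddfD (linear_of (mul_linl z))). Qed.
Lemma mulDr x y z : mul z (x + y) = mul z x + mul z y.
Proof. exact: (raddfD (linear_of (mul_linr z))). Qed.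
Lemma mulBl x y z : mul (x - y) z = mul x z - mul y z.
Proof. exact: (raddfB (linear_of (mul_linl z))). Qed.
Lemma mulBr x y z : mul z (x - y) = mul z x - mul z y.
Proof. exact: (raddfB (linear_of (mul_linr z))). Qed.
Lemma mulNr x z : mul z (- x) = - mul z x.
Proof. exact: (raddfN (linear_of (mul_linr z))). Qed.
Lemma mulZl k x z : mul (k *: x) z = k *: mul x z.
Proof. exact: (linearZZ (linear_of (mul_linl z))). Qed.
Lemma mulZr k x z : mul z (k *: x) = k *: mul z x.
Proof. exact: (linearZZ (linear_of (mul_linr z))). Qed.
Lemma mulMnl x z n : mul (x *+ n) z = mul x z *+ n.
Proof. exact: (raddfMn (linear_of (mul_linl z))). Qed.
Lemma mulMnr x z n : mul z (x *+ n) = mul z x *+ n.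
Proof. exact: (raddfMn (linear_of (mul_linr z))). Qed.
Lemma mul0l z : mul 0 z = 0.
Proof. exact: (raddf0 (linear_of (mul_linl z))). Qed.
Lemma mul0r z : mul z 0 = 0.
Proof. exact: (raddf0 (linear_of (mul_linr z))). Qed.
Lemma mul_suml n (F : 'I_n -> A) z : mul (\sum_(i < n) F i) z = \sum_(i < n) mul (F i) z.
Proof. exact: (raddf_sum (linear_of (mul_linl z))). Qed.
Lemma mul_sumr n (F : 'I_n -> A) z : mul z (\sum_(i < n) F i) = \sum_(i < n) mul z (F i).
Proof. exact: (raddf_sum (linear_of (mul_linr z))). Qed.

Lemma LNalt_left_alternative_lin t x y : in_LNalt mul t ->
  mul (mul t x + mul x t) y = mul t (mul x y) + mul x (mul t y).
Proof.
move=> /(_ x y) /eqP; rewrite /assoc mulDl -subr_eq0 opprK addrACA -opprD subr_eq0.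
by move/eqP.
Qed.

Lemma LNalt_assoc_double a P b : in_LNalt mul a ->
  assoc mul P a b *+ 2
  = (mul a (mul P b) - mul P (mul a b)) - mul (mul a P - mul P a) b.
Proof.
move=> Ha; rewrite mulr2n -{1}[assoc _ P a b]opprK -Ha /assoc mulBl !opprB.
by rewrite addrACA [RHS]addrACA; congr (_ + _); apply: addrC.
Qed.

Section LNaltPowers.
Hypothesis two_nz : (2%:R : K) != 0.

Lemma LNalt_left_alternative t y : in_LNalt mul t -> mul (mul t t) y = mul t (mul t y).
Proof.
by move=> Ht; apply: natmul2_inj two_nz _ _ _; rewrite /= !mulr2n -mulDl LNalt_left_alternative_lin.
Qed.

Variable c : A.
Hypothesis Hc : in_LNalt mul c.
Local Notation p := (npow mul one c).

Lemma mul_npow k y : mul (p k) y = iter k (mul c) y.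
Proof.
(* The induction also needs c^k c = c^(k+1). *)
move: y; suff [] : mul (p k) c = p k.+1 /\ forall y, mul (p k) y = iter k (mul c) y by [].
elim: k => [|k [IHc IHy]].
  by split=> [|y]; rewrite /npow /= mul1x // mulx1.
have IHy' y : mul (p k.+1) y = iter k.+1 (mul c) y.
  apply: natmul2_inj two_nz _ _ _; rewrite mulr2n.
  rewrite -[X in X + _ = _]/(mul (mul c (p k)) y) -IHc -mulDl.
  by rewrite LNalt_left_alternative_lin // !IHy -iterSr mulr2n.
by split=> //; rewrite IHy' -{2}[c]mulx1 -iterSr.
Qed.

Lemma npowS_mul k y : mul (p k.+1) y = mul c (mul (p k) y).
Proof. by rewrite !mul_npow. Qed.

Section CommutingPair.
Variable a : A.
Hypothesis Ha : in_LNalt mul a.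
Hypothesis Hac : mul a c = mul c a.
Local Notation D := (Dop mul a c).

Lemma mulCA_Dop x : mul a (mul c x) = D x + mul c (mul a x).
Proof. by rewrite /Dop subrK. Qed.

Lemma Dop_assoc x : D x = - (assoc mul a c x *+ 2).
Proof. by rewrite mulr2n opprD -{1}(Hc a x) /assoc -Hac opprB addrC subrKA. Qed.

Lemma commutator_npow m :
  mul a (p m.+1) - mul (p m.+1) a = \sum_(i < m) mul (p i) (D (p (m - i))).
Proof.
elim: m => [|m IH]; first by rewrite big_ord0 npowS_mul /= mul1x mulx1 Hac subrr.
rewrite npowS_mul -[p m.+2]/(mul c (p m.+1)) mulCA_Dop -addrA -mulBr IH.
rewrite big_ord_recl mul1x subn0 mul_sumr; congr (_ + _).
by apply: eq_bigr => i _; rewrite lift0 subSS npowS_mul.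
Qed.

Lemma npow_mul_commute m :
  mul (p m.+1) a = 2^-1 *: (mul a (p m.+1) + mul (p m.+1) a)
                   + \sum_(i < m) mul (p i) (assoc mul a c (p (m - i))).
Proof.
have hS : (\sum_(i < m) mul (p i) (assoc mul a c (p (m - i)))) *+ 2
          = mul (p m.+1) a - mul a (p m.+1).
  rewrite -sumrMnl -opprB commutator_npow -sumrN; apply: eq_bigr => i _.
  by rewrite Dop_assoc mulNr opprK mulMnr.
apply: natmul2_inj two_nz _ _ _; rewrite /= mulrnDl hS scalerMnl -mulr_natr mulVf //.
by rewrite scale1r mulr2n addrC subrKA.
Qed.

Lemma mul_c_ca y : mul (mul c (mul c a)) y = mul c (mul a (mul c y)).
Proof.
have mul_ca2 z : mul (mul c a) z *+ 2 = mul c (mul a z) + mul a (mul c z).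
  by rewrite mulr2n -{2}Hac -mulDl LNalt_left_alternative_lin.
have alt_cc := LNalt_left_alternative_lin (mul c c) y Ha.
rewrite !(LNalt_left_alternative _ Hc) in alt_cc.
have mul_cac2 : mul (mul (mul c a) c) y *+ 2
                = mul a (mul c (mul c y)) + mul c (mul c (mul a y)).
  by rewrite -mulMnl mul_ca2 Hac addrC alt_cc.
apply: natmul2_inj two_nz _ _ _; apply: (addIr (mul (mul (mul c a) c) y *+ 2)).
rewrite /= -mulrnDl -mulDl LNalt_left_alternative_lin // mulrnDl (mul_ca2 (mul c y)).
rewrite -[mul c (mul (mul c a) y) *+ 2]mulMnr mul_ca2 mulDr mul_cac2.
by rewrite mulr2n [X in X + _ = _]addrC addrACA [X in _ + X = _]addrC.
Qed.

Lemma Dop_mull y : D (mul c y) = mul (D c) y + mul c (D y).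
Proof.
have alt_cc := LNalt_left_alternative_lin (mul c c) y Ha.
rewrite !(LNalt_left_alternative _ Hc) mulDl mul_c_ca in alt_cc.
rewrite /Dop mulBl mulBr Hac mul_c_ca (canRL (addrK _) alt_cc).
by rewrite addrA subrK addrAC addrK.
Qed.

Section Derivation.
Variable delta : A -> A.
Hypothesis delta_mul : forall x y, delta (mul x y) = mul x (delta y) + mul (delta x) y.
Hypothesis delta_one : delta one = 0.
Hypothesis delta_c : delta c = D c.

Lemma delta_npow_mul k y : delta y = D y -> delta (mul (p k) y) = D (mul (p k) y).
Proof.
move=> hy; rewrite mul_npow; elim: k => //= k IH.
by rewrite delta_mul IH delta_c Dop_mull addrC.
Qed.

Lemma delta_npow k : delta (p k) = D (p k).
Proof. by rewrite -[p k]mulx1 delta_npow_mul // delta_one /Dop !mulx1 Hac subrr. Qed.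

Variable b : A.
Hypothesis delta_b : delta b = D b.

Lemma Dop_npow_mul k : D (mul (p k) b) = mul (D (p k)) b + mul (p k) (D b).
Proof. by rewrite -delta_npow_mul // delta_mul delta_npow delta_b addrC. Qed.

Lemma commutator_npow_mul m :
  mul a (mul (p m.+1) b) - mul (p m.+1) (mul a b)
  = mul (p m) (D b) *+ m.+1 + \sum_(i < m) mul (p i) (mul (D (p (m - i))) b).
Proof.
elim: m => [|m IH]; first by rewrite big_ord0 addr0 !npowS_mul /= !mul1x.
rewrite !(npowS_mul m.+1) mulCA_Dop -addrA -mulBr IH Dop_npow_mul.
rewrite (mulDr _ _ c) (mulMnr _ c) -npowS_mul.
rewrite mul_sumr big_ord_recl mul1x subn0.
have -> : \sum_(i < m) mul c (mul (p i) (mul (D (p (m - i))) b))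
        = \sum_(i < m) mul (p (lift ord0 i)) (mul (D (p (m.+1 - lift ord0 i))) b).
  by apply: eq_bigr => i _; rewrite lift0 subSS npowS_mul.
by rewrite [in RHS]mulrS [X in X + _ = _]addrC addrACA.
Qed.

Lemma assoc_npow m :
  assoc mul (p m.+1) a b
  = (m.+1%:R / 2) *: mul (p m) (D b)
    - 2^-1 *: \sum_(i < m) assoc mul (p i) (D (p (m - i))) b.
Proof.
have hsum : \sum_(i < m) assoc mul (p i) (D (p (m - i))) b
   = mul (\sum_(i < m) mul (p i) (D (p (m - i)))) b
     - \sum_(i < m) mul (p i) (mul (D (p (m - i))) b).
  by rewrite /assoc sumrB mul_suml.
apply: natmul2_inj two_nz _ _ _.
rewrite /= LNalt_assoc_double // commutator_npow_mul commutator_npow hsum.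
rewrite mulrnBl !scalerMnl -mulr_natr divfK // -[2^-1 *+ 2]mulr_natr mulVf // scale1r scaler_nat.
by rewrite opprB addrA.
Qed.

End Derivation.
End CommutingPair.
End LNaltPowers.

Section DualNumbers.

(* [(x, x')] stands for [x + e x'] with [e] central and [e^2 = 0]. *)
Definition dual_mul (X Y : A * A) : A * A := (mul X.1 Y.1, mul X.1 Y.2 + mul X.2 Y.1).
Definition dual_one : A * A := (one, 0).

Lemma dual_ualg : is_ualg dual_mul dual_one.
Proof.
split.
- move=> Y k X X'; congr (_, _) => /=; first by rewrite mulDl mulZl.
  by rewrite !mulDl !mulZl scalerDr addrACA.
- move=> X k Y Y'; congr (_, _) => /=; first by rewrite mulDr mulZr.
  by rewrite !mulDr !mulZr scalerDr addrACA.
- by case=> x1 x2; rewrite /dual_mul /= !mul1x mul0l addr0.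
- by case=> x1 x2; rewrite /dual_mul /= !mulx1 mul0r add0r.
Qed.

Lemma dual_assoc_snd X Y Z : (assoc dual_mul X Y Z).2
  = assoc mul X.1 Y.1 Z.2 + assoc mul X.1 Y.2 Z.1 + assoc mul X.2 Y.1 Z.1.
Proof.
rewrite /assoc /= !mulDl !mulDr !opprD.
by rewrite [LHS](AC ((1*2)*3) ((1*4)*(2*5)*(3*6))).
Qed.

Lemma dual_lnalt_tp_snd X Y Z : (lnalt_tp dual_mul X Y Z).2
  = lnalt_tp mul X.2 Y.1 Z.1 + lnalt_tp mul X.1 Y.2 Z.1 + lnalt_tp mul X.1 Y.1 Z.2.
Proof.
rewrite /lnalt_tp /= !mulDr !opprD.
by rewrite [LHS](AC (3*3*3*3) ((3*5*8*10)*(2*6*7*11)*(1*4*9*12))).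
Qed.

End DualNumbers.
End UnitalAlgebra.

Section EnvelopingAlgebra.
Variables (K : fieldType) (T : lmodType K) (tp : T -> T -> T -> T).
Variables (A : lmodType K) (mul : A -> A -> A) (one : A) (iota : T -> A).
Hypothesis HT : is_lts tp.
Hypothesis HU : is_UEA tp mul one iota.

Lemma UEA_ualg : is_ualg mul one. Proof. by case: HU. Qed.
Lemma iota_hom : comm_lts_hom tp mul iota. Proof. by case: HU. Qed.
Lemma iota_LNalt t : in_LNalt mul (iota t). Proof. by case: iota_hom. Qed.
Lemma iota_commute u v : mul (iota u) (iota v) = mul (iota v) (iota u).
Proof. by case: iota_hom. Qed.

Lemma iota_tp_Dop u v w : iota (tp u v w) = Dop mul (iota u) (iota v) (iota w).
Proof.
by case: iota_hom => _ _ -> _; rewrite /lnalt_tp /Dop (iota_commute u v) subrK.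
Qed.

Variables a c : T.

Definition dual_lift (t : T) : A * A := (iota t, iota (tp a c t)).

Lemma dual_lift_hom : comm_lts_hom tp (dual_mul mul) dual_lift.
Proof.
have Hmul := UEA_ualg.
case: HT => [[_ _ tp_linr] _ _ tp_der]; case: iota_hom => iota_lin _ iota_tp _.
split.
- move=> k x y; congr (_, _); first exact: iota_lin.
  by rewrite -iota_lin -(tp_linr a c k x y).
- move=> t X Y; apply: injective_projections; first exact: iota_LNalt.
  rewrite -[RHS]/(- (assoc _ _ _ _).2) !(dual_assoc_snd Hmul) /= !iota_LNalt.
  by rewrite !opprD addrAC.
- move=> x y z; apply: injective_projections; first exact: iota_tp.
  have iotaD u v : iota (u + v) = iota u + iota v by exact: (raddfD (linear_of iota_lin)).
  by rewrite (dual_lnalt_tp_snd Hmul) /= tp_der !iotaD !iota_tp.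
- move=> x y; congr (_, _); first exact: iota_commute.
  by rewrite iota_commute [mul (iota (tp a c x)) _]iota_commute addrC.
Qed.

Lemma derivation_exists : exists delta : A -> A,
  [/\ forall x y, delta (mul x y) = mul x (delta y) + mul (delta x) y,
      delta one = 0 &
      forall t, delta (iota t) = iota (tp a c t)].
Proof.
case: HU => Hmul Hiota _ univ.
have [g [[g_lin g_one g_mul] g_iota _]] :=
  univ _ _ _ (dual_ualg Hmul) _ dual_lift_hom.
have [id_U [_ _ id_unique]] := univ _ _ _ Hmul _ Hiota.
have fst_hom : ualg_hom mul one mul one (fun x => (g x).1).
  by split=> [k u v|//|u v]; rewrite ?g_lin ?g_one ?g_mul.
have id_hom : ualg_hom mul one mul one id by [].
have g_fst x : (g x).1 = x.
  rewrite (id_unique _ fst_hom) => [|t]; last by rewrite g_iota.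
  by rewrite -(id_unique _ id_hom).
exists (fun x => (g x).2); split=> [x y||t]; first by rewrite g_mul /= !g_fst.
  by rewrite g_one.
by rewrite g_iota.
Qed.

End EnvelopingAlgebra.

Unset Implicit Arguments.

Theorem mainTheorem2 (K : fieldType) (charK0 : [pchar K] =i pred0)
    (T : lmodType K) (tp : T -> T -> T -> T) (HT : is_lts tp)
    (A : lmodType K) (mul : A -> A -> A) (one : A) (iota : T -> A)
    (HU : is_UEA tp mul one iota) :
  forall n : nat, (0 < n)%N ->
    (forall a b c : T,
       assoc mul (npow mul one (iota c) n) (iota a) (iota b)
       = (n%:R / 2) *: mul (npow mul one (iota c) n.-1) (iota (tp a c b))
         - 2^-1 *: \sum_(i < n.-1)
              assoc mul (npow mul one (iota c) i)
                (Dop mul (iota a) (iota c) (npow mul one (iota c) (n.-1 - i)))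
                (iota b))
    /\
    (forall a c : T,
       mul (npow mul one (iota c) n) (iota a)
       = 2^-1 *: (mul (iota a) (npow mul one (iota c) n)
                  + mul (npow mul one (iota c) n) (iota a))
         + \sum_(i < n.-1)
              mul (npow mul one (iota c) i)
                (assoc mul (iota a) (iota c) (npow mul one (iota c) (n.-1 - i)))).
Proof.
move=> [//|m] _; rewrite [m.+1.-1]/=.
have two_nz : (2%:R : K) != 0 by rewrite ((pcharf0P K).1 charK0).
have Hmul := UEA_ualg HU.
have LN := iota_LNalt HU.
split=> [a b c | a c]; have Hac := iota_commute HU a c; last first.
  exact: (npow_mul_commute Hmul two_nz (LN c) Hac m).
have [delta [delta_mul delta_one delta_iota]] := derivation_exists HT HU a c.
have delta_Dop t : delta (iota t) = Dop mul (iota a) (iota c) (iota t).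
  by rewrite delta_iota (iota_tp_Dop HU).
rewrite (iota_tp_Dop HU).
exact: (assoc_npow Hmul two_nz (LN c) (LN a) Hac delta_mul delta_one (delta_Dop c) (delta_Dop b) m).
Qed.
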